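(* Every digraph $F$ is $\vec{\chi}$-maderian. More precisely, $\mathrm{mad}_{\vec{\chi}}(F)\leq 4^m(n-1)+1$, where $m=|A(F)|$ and $n=|V(F)|$.
   Context: $\vec{\chi}(D)$, the dichromatic number, is the least $k$ such that $V(D)$ can be partitioned into $k$ sets each inducing an acyclic subdigraph. A subdivision of $F$ is obtained by replacing each arc $(x,y)$ by a directed $(x,y)$-path, internally disjoint with new internal vertices. $F$ is $\vec{\chi}$-maderian if there is an integer $c$ such that every digraph $D$ with $\vec{\chi}(D)\ge c$ contains a subdivision of $F$ as a subdigraph; $\mathrm{mad}_{\vec{\chi}}(F)$ is the least such $c$. *)

(* Finite digraphs are loopless relations e : rel V on a finType V
   (digons allowed, no parallel arcs). *)
From mathcomp Require Import all_boot.
Set Implicit Arguments. Unset Strict Implicit. Unset Printing Implicit Defensive.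

Definition acyclic_in (V : finType) (e : rel V) (A : {set V}) : bool :=
  [forall x in A, forall y in A,
     e x y ==> ~~ connect [rel u v | [&& u \in A, v \in A & e u v]] y x].

Definition dicolorable (V : finType) (e : rel V) (k : nat) : bool :=
  [exists col : {ffun V -> 'I_k},
     [forall i : 'I_k, acyclic_in e [set x | col x == i]]].

(* Dichromatic number: least k such that e is k-dicolourable.  For a loopless digraph
   k = #|V| always works, so the search range 0..#|V| is exhaustive. *)
Definition dichromatic (V : finType) (e : rel V) : nat :=
  find (dicolorable e) (iota 0 #|V|.+1).

Definition loopless (V : finType) (e : rel V) : Prop := forall x, ~~ e x x.

Definition arcs (V : finType) (e : rel V) : {set V * V} := [set a | e a.1 a.2].

(* D (on VD, arcs d) contains a subdivision of F (on VF, arcs f) as a subdigraph: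
   an injective choice of branch vertices phi and, for every arc (x,y) of F, a directed
   (phi x, phi y)-path in D whose sequence of internal vertices is P x y; all internal
   vertices of all paths are pairwise distinct and distinct from the branch vertices. *)
Definition contains_subdivision (VF VD : finType) (f : rel VF) (d : rel VD) : Prop :=
  exists (phi : VF -> VD) (P : VF -> VF -> seq VD),
    injective phi /\
    (forall x y, f x y -> path d (phi x) (rcons (P x y) (phi y))) /\
    uniq (flatten [seq P a.1 a.2 | a <- enum (arcs f)] ++ [seq phi x | x <- enum VF]).

(* Induction on the number m of arcs of F.  Call a set S of vertices linked in A if any two
   distinct vertices of S are joined by a path whose interior lies in A but outside S.  If A is
   not (4K)-dicolourable, it contains such a linked S that is not K-dicolourable: take a strong
   component C of A that is not 4K-colourable and a root r in C.  Arcs raise the out-distance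
   from r by at most one, so inside one parity class of out-distances arcs never climb and every
   directed cycle stays at a single distance; hence some out-distance level L of C is not
   2K-colourable.  The same argument with in-distances to r gives a level S of L that is not
   K-colourable.  Two vertices u, v of S are joined through r by a shortest walk to r and a
   shortest walk from r; all their inner vertices are strictly closer to r, hence avoid S.
   Embedding F minus one arc in S by induction and routing the missing arc through A \ S
   gives a subdivision of F in A. *)

From mathcomp Require Import all_boot zify.
From Stdlib Require Import Classical IndefiniteDescription.

Set Implicit Arguments. Unset Strict Implicit. Unset Printing Implicit Defensive.

Definition induced (V : finType) (R : rel V) (A : {set V}) : rel V :=
  [rel u v | [&& u \in A, v \in A & R u v]].

Definition dicolorable_in (V : finType) (d : rel V) (A : {set V}) (k : nat) : Prop :=
  exists c : V -> nat,
    {in A, forall x, c x < k} /\ forall i, acyclic_in d [set x in A | c x == i].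

Section InducedWalks.

Variables (V : finType) (R : rel V).
Implicit Types (A B : {set V}) (x y : V).

Lemma induced_subset A B : A \subset B -> subrel (induced R A) (induced R B).
Proof. by move=> /subsetP AB x y /and3P[/AB xB /AB yB Rxy]; rewrite /induced /= xB yB. Qed.

Lemma connect_induced_subset A B x y :
  A \subset B -> connect (induced R A) x y -> connect (induced R B) x y.
Proof.
by move=> AB; apply: connect_sub => u v /(induced_subset AB); apply: connect1.
Qed.

Lemma induced_rev A :
  induced [rel x y | R y x] A =2 [rel x y | induced R A y x].
Proof. by move=> x y; rewrite /induced /= andbCA. Qed.

Lemma path_induced_mem A x p : path (induced R A) x p -> {subset p <= A}.
Proof.
elim: p x => //= y p IHp x /andP[/and3P[_ yA _] /IHp p_A] z.
by rewrite inE => /predU1P[-> | /p_A].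
Qed.

Lemma connect_induced_mem A x y :
  x \in A -> connect (induced R A) x y -> y \in A.
Proof.
move=> xA /connectP[p /path_induced_mem p_A ->].
by case/lastP: p p_A => //= p z p_A; rewrite last_rcons p_A ?mem_rcons ?mem_head.
Qed.

Lemma connect_induced_setI A B x y :
  (forall z, connect (induced R A) x z -> connect (induced R A) z y -> z \in B) ->
  connect (induced R A) x y -> connect (induced R (A :&: B)) x y.
Proof.
move=> between /connectP[p]; elim: p x between => [|z p IHp] x between /=.
  by move=> _ ->; apply: connect0.
case/andP=> xz zp y_last; have xz1 := connect1 xz.
have zy : connect (induced R A) z y by apply/connectP; exists p.
apply: connect_trans (IHp z _ zp y_last).
  have xB := between x (connect0 _ _) (connect_trans xz1 zy).
  have zB := between z xz1 zy.
  by apply: connect1; case/and3P: xz => xA zA Rxz; rewrite /induced /= !inE xA xB zA zB.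
by move=> w zw wy; apply: between wy; apply: connect_trans xz1 zw.
Qed.

Lemma connect_nonincreasing (g : V -> nat) :
  (forall u v, R u v -> g v <= g u) -> forall x y, connect R x y -> g y <= g x.
Proof.
move=> g_arc x _ /connectP[p + ->]; elim: p x => //= z p IHp x /andP[/g_arc zx /IHp].
by move/leq_trans; apply.
Qed.

Lemma connect_simple_path x y :
  x != y -> connect R x y -> exists Q, path R x (rcons Q y) /\ uniq (x :: rcons Q y).
Proof.
move=> + /connectP[p Rp y_last]; rewrite y_last; case/shortenP: Rp => p' Rp' uniq_p' _.
case/lastP: p' Rp' uniq_p' => [|Q z] Rp' uniq_p'; first by rewrite /= eqxx.
by rewrite last_rcons => _; exists Q.
Qed.

End InducedWalks.

Section Dicolorability.

Variables (V : finType) (d : rel V).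
Implicit Types (A B : {set V}) (k : nat).

Lemma acyclic_inP A :
  reflect {in A &, forall x y, d x y -> ~~ connect (induced d A) y x} (acyclic_in d A).
Proof.
apply: (iffP forall_inP) => [acyc x y xA yA | acyc x xA].
  by move: (acyc x xA) => /forall_inP/(_ y yA)/implyP.
by apply/forall_inP => y yA; apply/implyP; apply: acyc.
Qed.

Lemma acyclic_in_subset A B : B \subset A -> acyclic_in d A -> acyclic_in d B.
Proof.
move=> BA /acyclic_inP acyc; apply/acyclic_inP => x y xB yB dxy.
apply: contra (acyc x y (subsetP BA x xB) (subsetP BA y yB) dxy).
exact: connect_induced_subset.
Qed.

Lemma dicolorable_in_subset A B k :
  B \subset A -> dicolorable_in d A k -> dicolorable_in d B k.
Proof.
move=> /subsetP BA [c [c_lt c_acyc]]; exists c; split=> [x /BA /c_lt // | i].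
apply: acyclic_in_subset (c_acyc i).
by apply/subsetP => x; rewrite !inE => /andP[/BA -> ->].
Qed.

Lemma dicolorable_in_leq A k k' :
  k <= k' -> dicolorable_in d A k -> dicolorable_in d A k'.
Proof.
by move=> kk' [c [c_lt c_acyc]]; exists c; split=> // x /c_lt /leq_trans; apply.
Qed.

Lemma dicolorable_in_setU A B k k' :
  dicolorable_in d A k -> dicolorable_in d B k' -> dicolorable_in d (A :|: B) (k + k').
Proof.
move=> [c [c_lt c_acyc]] [c' [c'_lt c'_acyc]].
exists (fun x => if x \in A then c x else k + c' x); split=> [x | i].
  rewrite inE; case: ifP => [xA _ | _ /c'_lt]; last by rewrite ltn_add2l.
  exact: leq_trans (c_lt x xA) (leq_addr _ _).
have [ik | ki] := ltnP i k.
  apply: acyclic_in_subset (c_acyc i); apply/subsetP => x; rewrite !inE.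
  case: ifP => [_ /andP[_ ->] // | _ /andP[_ /eqP ci]].
  by move: ik; rewrite -ci ltnNge leq_addr.
apply: acyclic_in_subset (c'_acyc (i - k)); apply/subsetP => x; rewrite !inE.
case: ifP => [xA /andP[_ /eqP ci] | _ /andP[xB /eqP <-]].
  by move: ki; rewrite -ci leqNgt c_lt.
by rewrite /= in xB; rewrite xB addKn eqxx.
Qed.

Lemma dicolorable_in_set0 k : dicolorable_in d set0 k.
Proof.
exists (fun=> 0); split=> [x | i]; first by rewrite inE.
by apply/acyclic_inP => x y; rewrite !inE.
Qed.

Lemma dicolorable_in_card A : loopless d -> dicolorable_in d A #|A|.
Proof.
move=> d_loopless; exists (index^~ (enum A)); split=> [x xA | i].
  by rewrite cardE index_mem mem_enum.
apply/acyclic_inP => x y; rewrite !inE => /andP[xA /eqP <-] /andP[yA /eqP].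
move/(congr1 (nth x (enum A))); rewrite !nth_index ?mem_enum // => ->.
by rewrite (negbTE (d_loopless x)).
Qed.

End Dicolorability.

Lemma acyclic_in_rev (V : finType) (d : rel V) (A : {set V}) :
  acyclic_in [rel x y | d y x] A = acyclic_in d A.
Proof.
apply/acyclic_inP/acyclic_inP => acyc x y xA yA dxy;
  rewrite (eq_connect (induced_rev _ _)) connect_rev /=; exact: acyc.
Qed.

Lemma dicolorable_in_rev (V : finType) (d : rel V) (A : {set V}) k :
  dicolorable_in d A k -> dicolorable_in [rel x y | d y x] A k.
Proof.
by move=> [c [c_lt c_acyc]]; exists c; split=> // i; rewrite acyclic_in_rev.
Qed.

Lemma dicolorable_in_fibers (V : finType) (d : rel V) (L : eqType) (lam : V -> L)
    (B : {set V}) k :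
  {in B &, forall x y,
     connect (induced d B) x y -> connect (induced d B) y x -> lam x = lam y} ->
  (forall l, dicolorable_in d [set x in B | lam x == l] k) -> dicolorable_in d B k.
Proof.
(* A monochromatic cycle is strongly connected, hence lies in a single fiber. *)
move=> lam_scc /functional_choice[c c_col].
exists (fun x => c (lam x) x); split=> [x xB | i].
  by case: (c_col (lam x)) => + _; apply; rewrite !inE xB eqxx.
set W := [set x in B | c (lam x) x == i].
have WB : W \subset B by apply/subsetP => x; rewrite inE => /andP[].
apply/acyclic_inP => x y xW yW dxy; apply/negP => Wyx.
have Wxy : connect (induced d W) x y by apply: connect1; rewrite /induced /= xW yW.
have lam_between z : connect (induced d W) y z -> connect (induced d W) z x -> lam z = lam x.
  move=> yz zx; have zW := connect_induced_mem yW yz.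
  apply: lam_scc; rewrite ?(subsetP WB) //; apply: connect_induced_subset WB _ => //.
  exact: connect_trans Wxy yz.
have lam_y : lam y = lam x by apply: lam_between; rewrite ?connect0.
set X := [set z in [set z in B | lam z == lam x] | c (lam x) z == i].
have /acyclic_inP acyc : acyclic_in d X := (c_col (lam x)).2 i.
move: xW yW; rewrite /W !inE => /andP[xB cx] /andP[yB cy].
have xX : x \in X by rewrite !inE xB cx !eqxx.
have yX : y \in X by rewrite !inE yB -lam_y cy !eqxx.
have WX : W :&: [set z | lam z == lam x] \subset X.
  by apply/subsetP => z; rewrite !inE => /andP[/andP[-> cz] /eqP lz]; rewrite -lz cz eqxx.
apply: (negP (acyc x y xX yX dxy)); apply: connect_induced_subset WX _.
by apply: connect_induced_setI Wyx => z yz zx; rewrite inE lam_between.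
Qed.

Lemma dicolorable_in_levels (V : finType) (d : rel V) (B : {set V}) (g : V -> nat) k :
  {in B &, forall u v, d u v -> g v <= (g u).+1} ->
  (forall j, dicolorable_in d [set x in B | g x == j] k) -> dicolorable_in d B (2 * k).
Proof.
move=> g_arc col_level.
have col_parity b : dicolorable_in d [set x in B | odd (g x) == b] k.
  apply: (dicolorable_in_fibers (lam := g)) => [x y _ _ xy yx | j]; last first.
    apply: dicolorable_in_subset (col_level j).
    by apply/subsetP => x; rewrite !inE => /andP[/andP[-> _] ->].
  (* Within a parity class an arc cannot climb a level, as g v = (g u).+1 flips parity. *)
  have g_nonincr u v : induced d [set x in B | odd (g x) == b] u v -> g v <= g u.
    case/and3P; rewrite !inE => /andP[uB /eqP gu] /andP[vB /eqP gv] duv.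
    move: (g_arc u v uB vB duv); rewrite leq_eqVlt ltnS => /orP[/eqP gvu | //].
    by move: gu; rewrite -gv gvu /=; case: odd.
  by apply/eqP; rewrite eqn_leq !(connect_nonincreasing g_nonincr).
rewrite mul2n -addnn.
apply: dicolorable_in_subset (dicolorable_in_setU (col_parity false) (col_parity true)).
by apply/subsetP => x xB; rewrite !inE xB; case: odd.
Qed.

Section Distance.

Variables (V : finType) (R : rel V).
Implicit Types (s u v : V) (p : seq V).

Lemma dist_exists s v :
  exists n, ~~ connect R s v || [exists p : n.-tuple V, path R s p && (last s p == v)].
Proof.
case: (boolP (connect R s v)) => [/connectP[p Rp ->] | _]; last by exists 0.
by exists (size p); apply/existsP; exists (in_tuple p); rewrite /= Rp eqxx.
Qed.

(* The length of a shortest walk from s to v; junk value 0 when v is unreachable. *)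
Definition dist s v : nat := ex_minn (dist_exists s v).

Lemma distP s v :
  connect R s v -> exists p, [/\ path R s p, last s p = v & size p = dist s v].
Proof.
rewrite /dist => sv; case: ex_minnP => n; rewrite sv => /existsP[p /andP[Rp /eqP pv]] _.
by exists p; rewrite size_tuple.
Qed.

Lemma dist_min s p : path R s p -> dist s (last s p) <= size p.
Proof.
move=> Rp; rewrite /dist; case: ex_minnP => n _; apply.
by apply/orP; right; apply/existsP; exists (in_tuple p); rewrite /= Rp eqxx.
Qed.

Lemma dist_arc s u v : connect R s u -> R u v -> dist s v <= (dist s u).+1.
Proof.
case/distP=> p [Rp pu <-] Ruv.
by have := @dist_min s (rcons p v); rewrite last_rcons size_rcons rcons_path Rp pu; apply.
Qed.

Lemma connect_dist_below s v :
  connect R s v -> connect (induced R [set z | (dist s z < dist s v) || (z == v)]) s v.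
Proof.
case/distP=> p [Rp pv size_p]; set W := [set z | _].
have pW : all [in W] (s :: p).
  apply/allP => z zp; rewrite inE -size_p {size_p}; move: Rp pv.
  case/splitPl: zp => p1 [| w p2] p1z; first by rewrite cats0 -p1z => _ ->; rewrite eqxx orbT.
  rewrite cat_path -p1z => /andP[/dist_min dz _] _.
  by rewrite (leq_ltn_trans dz) // size_cat /= addnS ltnS leq_addr.
apply/connectP; exists p => //; apply: sub_in_path pW Rp => x y xW yW Rxy.
by rewrite /induced /= xW yW.
Qed.

End Distance.

Definition linked_in (V : finType) (d : rel V) (A S : {set V}) : Prop :=
  {in S &, forall u v, u != v ->
     exists Q, [/\ path d u (rcons Q v), uniq Q & {subset Q <= A :\: S}]}.

Section LinkedSubset.

Variables (V : finType) (d : rel V) (A : {set V}).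
Implicit Types (S : {set V}) (k : nat).

Local Notation R := (induced d A).
Local Notation R' := [rel x y | R y x].

Lemma not_dicolorable_strong_component k :
  ~ dicolorable_in d A k ->
  exists r (C : {set V}), [/\ C \subset A, ~ dicolorable_in d C k &
                {in C, forall z, connect R r z && connect R z r}].
Proof.
move=> ncol; pose scc x := [set y | connect R x y && connect R y x].
have [l ncol_l] : exists l, ~ dicolorable_in d [set x in A | scc x == l] k.
  apply: not_all_ex_not => col; apply: ncol; apply: dicolorable_in_fibers col.
  move=> x y _ _ xy yx; apply/setP => z; rewrite !inE.
  apply/andP/andP => [[xz zx] | [yz zy]].
    by split; [apply: connect_trans yx xz | apply: connect_trans zx xy].
  by split; [apply: connect_trans xy yz | apply: connect_trans zy yx].
case: (set_0Vmem [set x in A | scc x == l]) => [C0 | [r rC]].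
  by case: ncol_l; rewrite C0; apply: dicolorable_in_set0.
exists r, [set x in A | scc x == l]; split=> //.
  by apply/subsetP => x; rewrite inE => /andP[].
move=> z; move: rC; rewrite !inE => /andP[_ /eqP <-] /andP[_ /eqP /setP/(_ r)].
by rewrite !inE connect0 andbC => ->.
Qed.

Lemma linked_in_levels S r i j :
  {in S, forall x, [/\ connect R r x, connect R x r, dist R r x = i & dist R' r x = j]} ->
  linked_in d A S.
Proof.
move=> S_levels u v uS vS uv.
have [_ ur _ back_u] := S_levels u uS; have [rv _ lev_v _] := S_levels v vS.
pose Z := [set z | (z \notin S) || (z \in [:: u; v])].
have u_to_r : connect (induced R Z) u r.
  have := connect_dist_below (R := R') (s := r) (v := u); rewrite connect_rev => /(_ ur).
  rewrite (eq_connect (induced_rev _ _)) connect_rev /=; apply: connect_induced_subset.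
  apply/subsetP => z; rewrite !inE back_u => /orP[back_z | ->]; last by rewrite orbT.
  by apply/orP; left; apply: contraTN back_z => /S_levels[_ _ _ ->]; rewrite ltnn.
have r_to_v : connect (induced R Z) r v.
  apply: connect_induced_subset (connect_dist_below rv).
  apply/subsetP => z; rewrite !inE lev_v => /orP[lev_z | ->]; last by rewrite !orbT.
  by apply/orP; left; apply: contraTN lev_z => /S_levels[_ _ -> _]; rewrite ltnn.
have [Q [ZQ uQ]] := connect_simple_path uv (connect_trans u_to_r r_to_v).
have RQ : path R u (rcons Q v) by apply: sub_path ZQ => x y /and3P[].
exists Q; split.
- by apply: sub_path RQ => x y /and3P[].
- by move: uQ; rewrite /= rcons_uniq => /and3P[].
move=> z zQ; have zQv : z \in rcons Q v by rewrite mem_rcons inE zQ orbT.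
have := path_induced_mem ZQ zQv; rewrite !inE (path_induced_mem RQ zQv) andbT.
move: uQ; rewrite /= rcons_uniq mem_rcons inE negb_or => /and3P[/andP[_ uQ] vQ _].
by case/orP=> [// | /orP[/eqP zu | /eqP zv]]; [move: uQ | move: vQ]; rewrite -?zu -?zv zQ.
Qed.

End LinkedSubset.

Lemma not_dicolorable_linked_subset (V : finType) (d : rel V) (A : {set V}) k :
  ~ dicolorable_in d A (4 * k) ->
  exists S : {set V}, [/\ S \subset A, ~ dicolorable_in d S k & linked_in d A S].
Proof.
move=> ncol; set R := induced d A; set R' := [rel x y | R y x].
have [r [C [CA ncolC C_scc]]] := not_dicolorable_strong_component ncol.
have rC z : z \in C -> connect R r z by move=> /C_scc/andP[].
have Cr z : z \in C -> connect R z r by move=> /C_scc/andP[].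
pose L i := [set x in C | dist R r x == i].
have [i ncol_i] : exists i, ~ dicolorable_in d (L i) (2 * k).
  apply: not_all_ex_not => col; apply: ncolC; rewrite -[4]/(2 * 2) -mulnA.
  apply: dicolorable_in_levels col => u v uC vC duv; apply: dist_arc (rC u uC) _.
  by rewrite /R /induced /= (subsetP CA u uC) (subsetP CA v vC).
have LC : L i \subset C by apply/subsetP => x; rewrite inE => /andP[].
pose S j := [set x in L i | dist R' r x == j].
have [j ncol_j] : exists j, ~ dicolorable_in d (S j) k.
  apply: not_all_ex_not => col; apply: ncol_i.
  have /dicolorable_in_rev // : dicolorable_in [rel x y | d y x] (L i) (2 * k).
  apply: dicolorable_in_levels => [u v uL vL dvu | j']; last exact: dicolorable_in_rev (col j').
  apply: dist_arc; first by rewrite connect_rev /= Cr ?(subsetP LC).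
  by rewrite /R' /R /induced /= !(subsetP CA, subsetP LC).
exists (S j); split=> //.
  apply: subset_trans CA; apply: subset_trans LC.
  by apply/subsetP => x; rewrite inE => /andP[].
apply: (linked_in_levels (r := r) (i := i) (j := j)) => x.
rewrite !inE => /andP[/andP[xC /eqP lev_x] /eqP back_x].
by split=> //; [apply: rC | apply: Cr].
Qed.

Section Subdivisions.

Variables (VF VD : finType) (d : rel VD).
Implicit Types (f : rel VF) (phi : VF -> VD) (P : VF -> VF -> seq VD) (A S : {set VD}).

Definition subdivision_vertices f phi P : seq VD :=
  flatten [seq P a.1 a.2 | a <- enum (arcs f)] ++ [seq phi x | x <- enum VF].

Definition subdivision_in f A phi P : Prop :=
  [/\ injective phi, forall x y, f x y -> path d (phi x) (rcons (P x y) (phi y)),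
      uniq (subdivision_vertices f phi P) & {subset subdivision_vertices f phi P <= A}].

Definition remove_arc f x0 y0 : rel VF := [rel x y | f x y && ((x, y) != (x0, y0))].

Lemma arcs_remove_arc f x0 y0 : arcs (remove_arc f x0 y0) = arcs f :\ (x0, y0).
Proof. by apply/setP => [[x y]]; rewrite !inE andbC. Qed.

Lemma card_arcs_remove_arc f x0 y0 :
  f x0 y0 -> #|arcs (remove_arc f x0 y0)|.+1 = #|arcs f|.
Proof. by move=> fxy; rewrite arcs_remove_arc [RHS](cardsD1 (x0, y0)) inE fxy. Qed.

Lemma loopless_remove_arc f x0 y0 : loopless f -> loopless (remove_arc f x0 y0).
Proof. by move=> f_loopless x; rewrite /remove_arc /= (negbTE (f_loopless x)). Qed.

Lemma branch_vertex_mem f phi P x : phi x \in subdivision_vertices f phi P.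
Proof. by rewrite mem_cat map_f ?orbT ?mem_enum. Qed.

Lemma subdivision_in_arcless f A :
  arcs f = set0 -> #|VF| <= #|A| -> exists phi P, subdivision_in f A phi P.
Proof.
move=> f0 VF_A; pose phi x := enum_val (widen_ord VF_A (enum_rank x)).
have phi_inj : injective phi.
  by move=> x y /enum_val_inj/(congr1 val) /= /ord_inj/enum_rank_inj.
exists phi, (fun _ _ => [::]); split=> //.
- by move=> x y fxy; have := in_set0 (x, y); rewrite -f0 inE fxy.
- by rewrite /subdivision_vertices f0 enum_set0 map_inj_uniq ?enum_uniq.
- by rewrite /subdivision_vertices f0 enum_set0 => z /mapP[x _ ->]; apply: enum_valP.
Qed.

Lemma subdivision_vertices_remove_arc f x0 y0 phi P Q :
  f x0 y0 ->
  perm_eq (subdivision_vertices f phi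
             (fun x y => if (x, y) == (x0, y0) then Q else P x y))
          (Q ++ subdivision_vertices (remove_arc f x0 y0) phi P).
Proof.
move=> fxy; rewrite /subdivision_vertices catA perm_cat2r.
have arcs_f : perm_eq (enum (arcs f)) ((x0, y0) :: enum (arcs (remove_arc f x0 y0))).
  apply: uniq_perm; rewrite /= ?enum_uniq ?mem_enum ?arcs_remove_arc ?setD11 //.
  move=> a; rewrite in_cons !mem_enum in_setD1.
  by case: eqP => [-> | _]; rewrite ?inE.
apply: perm_trans (perm_flatten (perm_map _ arcs_f)) _; rewrite /= eqxx perm_cat2l.
have /eq_in_map -> : {in enum (arcs (remove_arc f x0 y0)),
    (fun a => if (a.1, a.2) == (x0, y0) then Q else P a.1 a.2) =1 (fun a => P a.1 a.2)}.
  by move=> [x y]; rewrite mem_enum arcs_remove_arc !inE => /andP[/negbTE->].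
by [].
Qed.

Lemma subdivision_in_add_arc f A S x0 y0 phi P Q :
  f x0 y0 -> S \subset A -> subdivision_in (remove_arc f x0 y0) S phi P ->
  path d (phi x0) (rcons Q (phi y0)) -> uniq Q -> {subset Q <= A :\: S} ->
  subdivision_in f A phi (fun x y => if (x, y) == (x0, y0) then Q else P x y).
Proof.
move=> fxy SA [phi_inj P_path P_uniq P_S] Q_path Q_uniq QAS.
have P_perm := subdivision_vertices_remove_arc phi P Q fxy.
split=> //.
- move=> x y fxy'; case: eqP => [[-> ->] // | /eqP xy].
  by apply: P_path; rewrite /remove_arc /= fxy' xy.
- rewrite (perm_uniq P_perm) cat_uniq Q_uniq P_uniq andbT /=.
  by apply/hasPn => z /P_S zS; apply/negP => /QAS; rewrite inE zS.
- move=> z; rewrite (perm_mem P_perm) mem_cat => /orP[/QAS | /P_S /(subsetP SA)] //.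
  by rewrite inE => /andP[].
Qed.

End Subdivisions.

Lemma not_dicolorable_subdivision_in (VD : finType) (d : rel VD) :
  loopless d ->
  forall m (VF : finType) (f : rel VF), loopless f -> #|arcs f| = m ->
  forall A : {set VD}, ~ dicolorable_in d A (4 ^ m * (#|VF| - 1)) ->
  exists phi P, subdivision_in d f A phi P.
Proof.
move=> d_loopless; elim=> [|m IHm] VF f f_loopless f_m A ncol.
  apply: subdivision_in_arcless; first by apply/eqP; rewrite -cards_eq0 f_m.
  rewrite leqNgt; apply/negP => lt_A; apply: ncol.
  by apply: dicolorable_in_leq (dicolorable_in_card A d_loopless); lia.
have [[x0 y0] f_xy] : exists a, a \in arcs f by apply/card_gt0P; rewrite f_m.
rewrite inE /= in f_xy.
have ncol4 : ~ dicolorable_in d A (4 * (4 ^ m * (#|VF| - 1))) by rewrite mulnA -expnS.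
have [S [SA ncolS linkS]] := not_dicolorable_linked_subset ncol4.
have f'_m : #|arcs (remove_arc f x0 y0)| = m.
  by apply/eqP; rewrite -eqSS card_arcs_remove_arc // f_m.
have [phi [P subdiv]] := IHm VF _ (loopless_remove_arc x0 y0 f_loopless) f'_m S ncolS.
have [phi_inj _ _ phi_S] := subdiv.
have phi_x0y0 : phi x0 != phi y0.
  by rewrite (inj_eq phi_inj); apply: contraTneq f_xy => ->; apply: f_loopless.
have phi_in x : phi x \in S := phi_S _ (branch_vertex_mem _ _ _ x).
have [Q [Q_path Q_uniq QAS]] := linkS _ _ (phi_in x0) (phi_in y0) phi_x0y0.
by exists phi; eexists; apply: subdivision_in_add_arc f_xy SA subdiv Q_path Q_uniq QAS.
Qed.

Lemma dichromatic_leq (V : finType) (d : rel V) k :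
  dicolorable_in d [set: V] k -> dichromatic d <= k.
Proof.
case=> c [c_lt c_acyc]; rewrite leqNgt; apply/negP => lt_k.
have := before_find 0 lt_k.
rewrite nth_iota ?add0n; last first.
  by rewrite -(size_iota 0 #|V|.+1) (leq_trans lt_k (find_size _ _)).
move/negbT/negP; apply; apply/existsP.
exists [ffun x => Ordinal (c_lt x (in_setT x))]; apply/forallP => i.
apply: acyclic_in_subset (c_acyc i).
by apply/subsetP => x; rewrite !inE ffunE.
Qed.

Theorem theorem32 (VF : finType) (f : rel VF) (hf : loopless f) :
  forall (VD : finType) (d : rel VD), loopless d ->
    4 ^ #|arcs f| * (#|VF| - 1) + 1 <= dichromatic d ->
    contains_subdivision f d.
Proof.
move=> VD d d_loopless large.
have ncol : ~ dicolorable_in d [set: VD] (4 ^ #|arcs f| * (#|VF| - 1)).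
  by move/dichromatic_leq; rewrite leqNgt -addn1 large.
have [phi [P [phi_inj P_path P_uniq _]]] :=
  not_dicolorable_subdivision_in d_loopless hf (erefl _) ncol.
by exists phi, P.
Qed.
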